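(* Let $K\subseteq\mathbb{R}^n$ be non-empty and compact. Then every $K$-positivity preserver $T=\sum_{\alpha\in\mathbb{N}_0^n}q_\alpha\partial^\alpha$ with constant coefficients $q_\alpha\in\mathbb{R}$ is of the form $T=c\cdot\mathbb{1}$ for some $c\in[0,\infty)$.
   Context: A linear map $T:\mathbb{R}[x_1,\dots,x_n]\to\mathbb{R}[x_1,\dots,x_n]$ is a $K$-positivity preserver if it maps every polynomial non-negative on $K$ to a polynomial non-negative on $K$. $\mathbb{1}$ denotes the identity map. *)

From HB Require Import structures.
From mathcomp Require Import all_boot all_order all_algebra.
From mathcomp Require Import mpoly.
From mathcomp Require Import reals.

Set Implicit Arguments.
Unset Strict Implicit.
Unset Printing Implicit Defensive.
Import GRing.Theory Num.Theory.
Local Open Scope ring_scope.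

Definition peval (R : realType) (n : nat) (p : {mpoly R[n]}) (x : 'rV[R]_n) : R :=
  p.@[fun i => x ord0 i].

(* The differential operator with constant coefficients
   T = \sum_{alpha in N_0^n} q_alpha \partial^alpha, applied to p.
   Only multi-indices alpha with |alpha| < msize p contribute
   (otherwise \partial^alpha p = 0), so the sum is finite. *)
Definition const_coeff_dop (R : realType) (n : nat)
    (q : 'X_{1..n} -> R) (p : {mpoly R[n]}) : {mpoly R[n]} :=
  \sum_(a : 'X_{1..n < msize p}) q (val a) *: p^`M[val a].

Definition K_pos_preserver (R : realType) (n : nat) (K : 'rV[R]_n -> Prop)
    (T : {mpoly R[n]} -> {mpoly R[n]}) : Prop :=
  forall p : {mpoly R[n]},
    (forall x, K x -> 0 <= peval p x) -> forall x, K x -> 0 <= peval (T p) x.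

Definition scaled_identity (R : realType) (n : nat) (c : R) :
    {mpoly R[n]} -> {mpoly R[n]} := fun p => c *: p.

(* A differential operator T with constant coefficients commutes with translations, so
   the functional L P := (T P)(0) = \sum_a q_a a! P_a satisfies L P >= 0 whenever
   P(. - x) >= 0 on K for some x in K.  Since K is compact, every coordinate x_j attains
   its extrema on K.  Testing L on squares, and on products of an even monomial with one
   or two factors x_j - t, t such an extremum, gives L(x^a) = 0, hence q_a = 0, for
   every a != 0.  Therefore T = q_0 * 1, and q_0 = L(1) >= 0. *)

From HB Require Import structures.
From mathcomp Require Import all_boot all_order all_algebra.
From mathcomp Require Import mpoly.
From mathcomp Require ssrcomplements.
From mathcomp Require Import ring lra.
From mathcomp Require Import all_classical all_reals all_analysis.
Import Order.TTheory GRing.Theory Num.Theory.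
Import numFieldNormedType.Exports.
Local Open Scope ring_scope.

Set Implicit Arguments.
Unset Strict Implicit.

Lemma mnm_neq0_addU (n : nat) (m : 'X_{1..n}) :
  m != 0%MM -> exists j : 'I_n, exists m', m = (m' + U_(j))%MM.
Proof.
rewrite -mdeg_eq0 mdegE => sum_neq0.
have /existsP [j m_j_gt0] : [exists j, (0 < m j)%N].
  apply: contraNT sum_neq0 => /existsPn m_eq0.
  by rewrite big1 // => i _; apply/eqP; rewrite -leqn0 leqNgt m_eq0.
exists j, (m - U_(j))%MM; rewrite submK //.
by apply/mnm_lepP => i; rewrite mnm1E; case: eqP => [<-|].
Qed.

Section Shift.
Variables (R : realType) (n : nat).

Definition shiftX (x : 'I_n -> R) : n.-tuple {mpoly R[n]} :=
  [tuple 'X_i - (x i)%:MP | i < n].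

Lemma meval_comp_shiftX x v (P : {mpoly R[n]}) :
  (P \mPo shiftX x).@[v] = P.@[fun i => v i - x i].
Proof.
rewrite comp_mpoly_meval; apply: meval_eq => i.
by rewrite tnth_mktuple mevalB mevalXU mevalC.
Qed.

Lemma mderiv_comp_shiftXU x i j :
  ('X_j \mPo shiftX x)^`M(i) = 'X_j^`M(i) \mPo shiftX x.
Proof.
rewrite comp_mpolyXU -tnth_nth tnth_mktuple mderivB mderivC subr0.
rewrite mderivX comp_mpolyZ mnm1E.
have [->|_] := eqVneq j i; last by rewrite !scale0r.
have -> : (U_(i) - U_(i) = 0)%MM by apply/mnmP => l; rewrite !mnmE subnn.
by rewrite mpolyX0 comp_mpoly1.
Qed.

Lemma mderiv_comp_shiftX x i m :
  ('X_[m] \mPo shiftX x)^`M(i) = 'X_[m]^`M(i) \mPo shiftX x.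
Proof.
have [k] := ubnP (mdeg m); elim: k m => // k IH m lt_m_k.
have [->|/mnm_neq0_addU [j [m' def_m]]] := eqVneq m 0%MM.
  by rewrite mpolyX0 comp_mpoly1 -mpolyC1 mderivC comp_mpoly0.
have lt_m'_k : (mdeg m' < k)%N by move: lt_m_k; rewrite def_m mdegD mdeg1 addn1 ltnS.
rewrite def_m mpolyXD !rmorphM /= !mderivM !rmorphD !rmorphM /=.
by rewrite IH // mderiv_comp_shiftXU.
Qed.

Lemma mderiv_comp_shift x i (P : {mpoly R[n]}) :
  (P \mPo shiftX x)^`M(i) = P^`M(i) \mPo shiftX x.
Proof.
elim/mpolyind: P => [|c m P _ _ IH]; first by rewrite comp_mpoly0 !mderiv0 comp_mpoly0.
by rewrite !(comp_mpolyD, mderivD, comp_mpolyZ, mderivZ) IH mderiv_comp_shiftX.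
Qed.

Lemma mderivm_comp_shift x a (P : {mpoly R[n]}) :
  (P \mPo shiftX x)^`M[a] = P^`M[a] \mPo shiftX x.
Proof.
rewrite !mderivm_foldr; elim: (flatten _) => //= i s ->.
exact: mderiv_comp_shift.
Qed.

End Shift.

Section Coefficients.
Variables (R : realType) (n : nat).
Implicit Types (P : {mpoly R[n]}) (a m : 'X_{1..n}).

Lemma meval0E P : P.@[fun=> 0] = P@_0%MM.
Proof.
elim/mpolyind: P => [|c m P _ _ IH]; first by rewrite meval0 mcoeff0.
rewrite mevalD mevalZ mevalX mcoeffD mcoeffZ mcoeffX IH prodrXr expr0n.
by rewrite -mdegE mdeg_eq0 eq_sym.
Qed.

Definition mfact a : nat := \prod_(i < n) (a i)`!.

Lemma mfact_gt0 a : (0 < mfact a)%N.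
Proof. by rewrite prodn_gt0 // => i; rewrite fact_gt0. Qed.

Lemma mfact0 : mfact 0%MM = 1%N.
Proof. by rewrite /mfact big1 // => i _; rewrite mnm0E. Qed.

Lemma mcoeff0_mderivm a P : (P^`M[a])@_0%MM = P@_a *+ mfact a.
Proof.
rewrite mcoeff_mderivm addm0; congr (_ *+ _).
by apply: eq_bigr => i _; rewrite ffactnn.
Qed.

Lemma mderivm_eq0 a P : (msize P <= mdeg a)%N -> P^`M[a] = 0.
Proof.
move=> le_P_a; apply/mpolyP => m; rewrite mcoeff_mderivm mcoeff0.
rewrite memN_msupp_eq0 ?mul0rn //; apply: msize_mdeg_ge.
by rewrite mdegD (leq_trans le_P_a) // leq_addr.
Qed.

End Coefficients.

Section ConstCoeffDop.
Variables (R : realType) (n : nat) (q : 'X_{1..n} -> R).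
Implicit Types (P : {mpoly R[n]}) (a m : 'X_{1..n}).

Local Notation T := (const_coeff_dop q).

Lemma const_coeff_dopE k P : (msize P <= k)%N ->
  T P = \sum_(a : 'X_{1..n < k}) q a *: P^`M[a].
Proof.
move=> le_P_k; pose I : subFinType _ := 'X_{1..n < msize P}.
pose J : subFinType _ := 'X_{1..n < k}.
rewrite [RHS](bigID (fun a : J => (mdeg a < msize P)%N)) /=.
rewrite [X in _ + X]big1 ?addr0; last first.
  by move=> a; rewrite -leqNgt => /mderivm_eq0 ->; rewrite scaler0.
have le_I_J (m : 'X_{1..n}) : (mdeg m < msize P -> mdeg m < k)%N.
  by move/leq_trans; apply.
pose F a := q a *: P^`M[a].
rewrite /const_coeff_dop.
apply: etrans (@ssrcomplements.big_sub_widen _ _ _ _ _ _ I J predT F le_I_J) _.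
exact: eq_bigl.
Qed.

Lemma const_coeff_dop_is_linear : linear T.
Proof.
move=> c P1 P2; set k := maxn (msize P1) (msize P2).
have le_P1 : (msize P1 <= k)%N by rewrite leq_maxl.
have le_P2 : (msize P2 <= k)%N by rewrite leq_maxr.
have le_sum : (msize (c *: P1 + P2) <= k)%N.
  rewrite (leq_trans (mmeasureD_le _ _ _)) // geq_max le_P2 andbT.
  exact: leq_trans (msizeZ_le _ _) le_P1.
rewrite !(const_coeff_dopE le_P1, const_coeff_dopE le_P2, const_coeff_dopE le_sum).
rewrite scaler_sumr -big_split /=; apply: eq_bigr => a _.
by rewrite linearD linearZ /= scalerDr !scalerA mulrC.
Qed.

HB.instance Definition _ :=
  GRing.isLinear.Build R {mpoly R[n]} {mpoly R[n]} _ T const_coeff_dop_is_linear.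

Lemma const_coeff_dop_comp_shift x P :
  T (P \mPo shiftX x) = T P \mPo shiftX x.
Proof.
set k := maxn (msize P) (msize (P \mPo shiftX x)).
rewrite (@const_coeff_dopE k) ?leq_maxr // (@const_coeff_dopE k) ?leq_maxl //.
rewrite raddf_sum /=; apply: eq_bigr => a _.
by rewrite mderivm_comp_shift linearZ.
Qed.

Definition dop_at0 P : R := (T P).@[fun=> 0].

Lemma dop_at0D P1 P2 : dop_at0 (P1 + P2) = dop_at0 P1 + dop_at0 P2.
Proof. by rewrite /dop_at0 raddfD mevalD. Qed.

Lemma dop_at0Z t P : dop_at0 (t *: P) = t * dop_at0 P.
Proof. by rewrite /dop_at0 linearZ mevalZ. Qed.

Lemma dop_at0N P : dop_at0 (- P) = - dop_at0 P.
Proof. by rewrite /dop_at0 raddfN mevalN. Qed.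

Lemma dop_at0X m : dop_at0 'X_[m] = q m *+ mfact m.
Proof.
have lt_m : (mdeg m < msize 'X_[R, m])%N by rewrite msizeX.
rewrite /dop_at0 (const_coeff_dopE (leqnn _)) raddf_sum /=.
rewrite (bigD1 (Sub m lt_m)) //= big1 ?addr0 => [|a ne_a_m].
  by rewrite mevalZ meval0E mcoeff0_mderivm mcoeffX eqxx mulr1n mulrnAr mulr1.
rewrite mevalZ meval0E mcoeff0_mderivm mcoeffX eq_sym.
suff /negbTE -> : val a != m by rewrite mul0rn mulr0.
by move: ne_a_m; rewrite -(inj_eq val_inj) SubK.
Qed.

Lemma const_coeff_dop_scale : (forall a, a != 0%MM -> q a = 0) ->
  forall P, T P = q 0%MM *: P.
Proof.
move=> q_eq0 P.
have lt0 : (mdeg (0%MM : 'X_{1..n}) < (msize P).+1)%N by rewrite mdeg0.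
rewrite (@const_coeff_dopE (msize P).+1) // (bigD1 (Sub 0%MM lt0)) //=.
rewrite mderivm0m big1 ?addr0 // => a ne_a_0.
by rewrite q_eq0 ?scale0r //; apply: contraNneq ne_a_0 => a_eq0; apply: val_inj.
Qed.

End ConstCoeffDop.

Local Open Scope classical_set_scope.

Lemma compact_coord_extrema (R : realType) (n : nat) (K : set 'rV[R]_n) j :
  K !=set0 -> compact K ->
  exists2 xm, K xm & exists2 xM, K xM &
    forall y, K y -> xm ord0 j <= y ord0 j <= xM ord0 j.
Proof.
move=> K0 cK; have coord_cont : {within K, continuous (fun y : 'rV[R]_n => y ord0 j)}.
  by apply: continuous_subspaceT => y; exact: coord_continuous.
have [xm /set_mem Kxm xm_min] := EVT_min_rV K0 cK coord_cont.
have [xM /set_mem KxM xM_max] := EVT_max_rV K0 cK coord_cont.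
exists xm => //; exists xM => // y Ky.
by rewrite xm_min ?xM_max //; exact: mem_set.
Qed.

Section Preserver.
Variables (R : realType) (n : nat) (K : set 'rV[R]_n) (q : 'X_{1..n} -> R).
Hypotheses (K0 : K !=set0) (cK : compact K).
Hypothesis preserves : K_pos_preserver K (const_coeff_dop q).
Implicit Types (P : {mpoly R[n]}) (a b c : 'X_{1..n}).

Local Notation L := (dop_at0 q).

Lemma dop_at0_ge0 x P : K x ->
  (forall y, K y -> 0 <= P.@[fun i => y ord0 i - x ord0 i]) -> 0 <= L P.
Proof.
move=> Kx P_ge0; have := @preserves (P \mPo shiftX (fun i => x ord0 i)) _ x Kx.
rewrite /peval const_coeff_dop_comp_shift meval_comp_shiftX.
rewrite (meval_eq _ (v2 := fun=> 0)) => [|i]; last exact: subrr.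
by apply => y Ky; rewrite /peval meval_comp_shiftX; exact: P_ge0.
Qed.

Lemma dop_at0_sqr_ge0 P : 0 <= L (P ^+ 2).
Proof.
have [x Kx] := K0; apply: (dop_at0_ge0 Kx) => y _.
by rewrite rmorphXn sqr_ge0.
Qed.

Lemma dop_at0X_double_addU c j : L 'X_[c + c + U_(j)] = 0.
Proof.
have [xm Kxm [xM KxM /(_ _ _)/andP coord_bounds]] := compact_coord_extrema j K0 cK.
have -> : 'X_[c + c + U_(j)] = 'X_[c] ^+ 2 * 'X_j :> {mpoly R[n]}.
  by rewrite !mpolyXD expr2.
apply/le_anti/andP; split.
- rewrite -oppr_ge0 -dop_at0N; apply: (dop_at0_ge0 KxM) => y Ky.
  rewrite mevalN !mevalM -expr2 mevalXU -mulrN mulr_ge0 ?sqr_ge0 //.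
  by rewrite oppr_ge0 subr_le0; case: (coord_bounds y Ky).
- apply: (dop_at0_ge0 Kxm) => y Ky.
  rewrite !mevalM -expr2 mevalXU mulr_ge0 ?sqr_ge0 //.
  by rewrite subr_ge0; case: (coord_bounds y Ky).
Qed.

Lemma dop_at0X_double b : b != 0%MM -> L 'X_[b + b] = 0.
Proof.
case/mnm_neq0_addU => j [b' ->].
have [xm Kxm [xM KxM /(_ _ _)/andP coord_bounds]] := compact_coord_extrema j K0 cK.
set D := xM ord0 j - xm ord0 j.
have X2b : 'X_[b' + U_(j) + (b' + U_(j))] = ('X_[b' + U_(j)]) ^+ 2 :> {mpoly R[n]}.
  by rewrite mpolyXD expr2.
apply/le_anti/andP; split; last by rewrite X2b dop_at0_sqr_ge0.
(* D is the width of K in direction j, so X^(2b') (-X_j) (D + X_j) is >= 0 on K - xM. *)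
have : 0 <= L (- (D *: 'X_[b' + b' + U_(j)]) - 'X_[b' + U_(j) + (b' + U_(j))]).
  apply: (dop_at0_ge0 KxM) => y Ky.
  have -> : - (D *: 'X_[b' + b' + U_(j)]) - 'X_[b' + U_(j) + (b' + U_(j))] =
      'X_[b'] ^+ 2 * (- 'X_j) * (D%:MP + 'X_j) :> {mpoly R[n]}.
    by rewrite !mpolyXD -!mul_mpolyC; ring.
  rewrite !mevalM -expr2 mevalN mevalD mevalC mevalXU.
  have [ge_xm le_xM] := coord_bounds y Ky.
  by rewrite mulr_ge0 ?(mulr_ge0 (sqr_ge0 _)) ?oppr_ge0 ?subr_le0 // /D; lra.
by rewrite dop_at0D !dop_at0N dop_at0Z dop_at0X_double_addU mulr0 oppr0 add0r oppr_ge0.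
Qed.

Lemma dop_at0X_eq0 a : a != 0%MM -> L 'X_[a] = 0.
Proof.
case/mnm_neq0_addU => j [b ->].
have [->|b_neq0] := eqVneq b 0%MM.
  by have := dop_at0X_double_addU 0%MM j; rewrite !add0m.
have Uj_neq0 : U_(j)%MM != 0%MM by rewrite mnm1_eq0.
have scaled_ge0 t : 0 <= (2 * t) * L 'X_[b + U_(j)].
  have := dop_at0_sqr_ge0 ('X_j + t *: 'X_[b]).
  have -> : ('X_j + t *: 'X_[b]) ^+ 2 = 'X_[U_(j) + U_(j)] + (2 * t) *: 'X_[b + U_(j)]
      + (t ^+ 2) *: 'X_[b + b] :> {mpoly R[n]}.
    rewrite !mpolyXD -!mul_mpolyC rmorphM rmorphXn /=; ring.
  by rewrite !dop_at0D !dop_at0Z !dop_at0X_double // mulr0 add0r addr0.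
by have := scaled_ge0 1; have := scaled_ge0 (-1); lra.
Qed.

End Preserver.

Theorem corollary4p13 (R : realType) (n : nat) (K : set 'rV[R]_n)
  (q : mpoly.multinom n -> R) :
  K !=set0 -> compact K ->
  K_pos_preserver K (const_coeff_dop q) ->
  exists2 c : R, 0 <= c & forall p : mpoly.mpoly n R, const_coeff_dop q p = scaled_identity c p.
Proof.
move=> K0 cK preserves; exists (q 0%MM).
  have := dop_at0_sqr_ge0 K0 preserves 1.
  by rewrite expr1n -mpolyX0 dop_at0X mfact0.
apply: const_coeff_dop_scale => a a_neq0; apply/eqP.
have := dop_at0X_eq0 K0 cK preserves a_neq0; rewrite dop_at0X => /eqP.
by rewrite mulrn_eq0 eqn0Ngt mfact_gt0.
Qed.
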